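(* Let $A=\mathrm{diag}(G_1,\dots,G_m,[1])\in\mathbb{R}^{n\times n}$ (where the trailing block $[1]$ may or may not be present), with $G_j=\begin{bmatrix}c_j&s_j\\-s_j&c_j\end{bmatrix}$, $c_j^2+s_j^2=1$, $s_j\neq 0$, and $0<c_1<c_2<\cdots<c_m$. Let $v_0\in\mathbb{R}^n$ be a unit norm vector with $d(A,v_0)\geq 2$ and $v_0^{(1)}\neq 0$, run the iteration ACI($1$) below, and let $k_0$ and $\varrho\in(0,1)$ be such that $\|v_{k+1}^{(j)}\|\leq\varrho\|v_k^{(j)}\|$ for all $k\geq k_0$ and all blocks $j\geq 2$. Then for all $k\geq k_0$, $$\|v_{k+1}^{(1)}-v_k^{(1)}\|\leq\varrho^{\,k-k_0}.$$
   Context: Block partitioning: every $v\in\mathbb{R}^n$ is written as $v=[v^{(1)};\dots;v^{(m)};v^{(m+1)}]$ with $v^{(j)}\in\mathbb{R}^2$ for $j=1,\dots,m$ (conforming with the blocks $G_j$) and $v^{(m+1)}\in\mathbb{R}$ (present only if the block $[1]$ is present). ACI($1$): for $k=0,1,2,\dots$: $\widetilde w_k=(A-\alpha_kI)v_k$ with $\alpha_k=v_k^TAv_k$; $w_k=\widetilde w_k/\|\widetilde w_k\|$; $\widetilde v_{k+1}=(A^T-\beta_kI)w_k$ with $\beta_k=w_k^TAw_k$; $v_{k+1}=\widetilde v_{k+1}/\|\widetilde v_{k+1}\|$. $d(A,v)$ is the grade of $v$ w.r.t. $A$ (degree of the monic polynomial $p$ of smallest degree with $p(A)v=0$); $\|\cdot\|$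 is the Euclidean norm. (The paper states this with the normalization $k_0=0$, giving $\|v_{k+1}^{(1)}-v_k^{(1)}\|\leq\varrho^k$.) *)

From HB Require Import structures.
From mathcomp Require Import all_boot all_order all_algebra.
From mathcomp Require Import boolp reals.
Set Implicit Arguments. Unset Strict Implicit. Unset Printing Implicit Defensive.
Import Order.TTheory GRing.Theory Num.Theory.
Local Open Scope ring_scope.

Section Defs.
Variable R : realType.

Definition poly_mx_app n (A : 'M[R]_n) (p : {poly R}) (v : 'cV[R]_n) : 'cV[R]_n :=
  \sum_(i < size p) p`_i *: (A ^+ i *m v).

Definition annih_deg n (A : 'M[R]_n) (v : 'cV[R]_n) (d : nat) : Prop :=
  exists p : {poly R}, [/\ p \is monic, size p = d.+1 & poly_mx_app A p v = 0].

Lemma annih_deg_exists n (A : 'M[R]_n) (v : 'cV[R]_n) : exists d, annih_deg A v d.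
Proof.
case: n A v => [|k] A v.
  exists 0%N, 1; split; [exact: monic1 | by rewrite size_poly1 |].
  by apply/matrixP=> -[].
exists k.+1, (char_poly A); split; [exact: char_poly_monic | exact: size_char_poly |].
have CH := Cayley_Hamilton A.
rewrite /horner_mx /horner_morph horner_coef size_map_poly in CH.
rewrite /poly_mx_app.
transitivity ((\sum_(i < size (char_poly A))
   (map_poly scalar_mx (char_poly A))`_i * A ^+ i) *m v); last by rewrite CH mul0mx.
rewrite mulmx_suml; apply: eq_bigr => i _.
by rewrite coef_map /= -mulmxE mul_scalar_mx scalemxAl.
Qed.

Lemma annih_deg_existsb n (A : 'M[R]_n) (v : 'cV[R]_n) :
  exists d, `[< annih_deg A v d >].
Proof. by have [d hd] := annih_deg_exists A v; exists d; apply/asboolP. Qed.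

Definition grade n (A : 'M[R]_n) (v : 'cV[R]_n) : nat :=
  ex_minn (@annih_deg_existsb n A v).

Definition enorm n (v : 'cV[R]_n) : R := Num.sqrt (\sum_i v i 0 ^+ 2).

(* i-th coordinate (0-based, nat index), 0 if out of range *)
Definition coordn n (v : 'cV[R]_n) (i : nat) : R :=
  if insub i is Some k then v k 0 else 0.

(* j-th 2x2 block (1-based, j = 1..m): coordinates 2(j-1), 2(j-1)+1 *)
Definition blk n (v : 'cV[R]_n) (j : nat) : 'cV[R]_2 :=
  \col_(t < 2) coordn v (2 * j.-1 + t)%N.

(* A = diag(G_1,...,G_m,[1]) with G_j = [[c_j, s_j], [-s_j, c_j]];
   b = true iff the trailing block [1] is present; size n = 2m + b. *)
Definition blockrot (m : nat) (b : bool) (c s : nat -> R) : 'M[R]_(2 * m + b) :=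
  \matrix_(i, j)
    if (i < 2 * m)%N then
      (if (i./2 == j./2) then
         (if i == j then c (i./2).+1
          else if ~~ odd i then s (i./2).+1 else - s (i./2).+1)
       else 0)
    else (if i == j then 1 else 0).

Definition normalize n (x : 'cV[R]_n) : 'cV[R]_n := (enorm x)^-1 *: x.

Definition aci_w n (A : 'M[R]_n) (v : 'cV[R]_n) : 'cV[R]_n :=
  let alpha := (v^T *m A *m v) 0 0 in
  normalize ((A - alpha%:M) *m v).

Definition aci_step n (A : 'M[R]_n) (v : 'cV[R]_n) : 'cV[R]_n :=
  let w := aci_w A v in
  let beta := (w^T *m A *m w) 0 0 in
  normalize ((A^T - beta%:M) *m w).

Definition aci_v n (A : 'M[R]_n) (v0 : 'cV[R]_n) (k : nat) : 'cV[R]_n :=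
  iter k (aci_step A) v0.

End Defs.

From HB Require Import structures.
From mathcomp Require Import all_boot all_order all_algebra.
From mathcomp Require Import boolp reals.
From mathcomp Require Import ring lra zify.
Set Implicit Arguments. Unset Strict Implicit. Unset Printing Implicit Defensive.
Import Order.TTheory GRing.Theory Num.Theory.
Local Open Scope ring_scope.

(* Write v = [x; y] with x the first block.  Since the blocks of A are
   rotations, ||(A - a)v||^2 = 1 - 2 a (v^T A v) + a^2 for a unit v, so both
   half-steps of ACI(1) keep unit vectors and act on x through the 2x2 map
   (G_1^T - beta)(G_1 - alpha) / (N_alpha N_beta), N_a = sqrt(1 - a^2).  Its
   symmetric part is (1 - (alpha + beta) c_1 + alpha beta) / (N_alpha N_beta),
   which is >= 1 by AM-GM on N_alpha N_beta because the Rayleigh quotients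
   alpha, beta are >= c_1.  Hence
   <x_{k+1}, x_k> >= ||x_k||^2 and
   ||x_{k+1} - x_k||^2 <= ||x_{k+1}||^2 - ||x_k||^2 = ||y_k||^2 - ||y_{k+1}||^2
                       <= ||y_k||^2 <= rho^(2(k - k0)),
   the last step because y contracts by rho from k0 on. *)

Section Coordinates.
Variables (R : realType) (n : nat).
Implicit Types (u v : 'cV[R]_n) (i : nat).

Lemma coordn_ord v (i : 'I_n) : coordn v i = v i 0.
Proof. by rewrite /coordn; case: insubP => [j _ /val_inj -> //|]; rewrite ltn_ord. Qed.

Lemma coordn_out v i : (n <= i)%N -> coordn v i = 0.
Proof. by move=> h; rewrite /coordn; case: insubP => // j; rewrite ltnNge h. Qed.

Lemma coordnB u v i : coordn (u - v) i = coordn u i - coordn v i.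
Proof. by rewrite /coordn; case: insubP => // *; rewrite ?mxE ?subr0. Qed.

Lemma coordnZ a v i : coordn (a *: v) i = a * coordn v i.
Proof. by rewrite /coordn; case: insubP => // *; rewrite ?mxE ?mulr0. Qed.

Lemma coordn_shift (M : 'M[R]_n) a v i :
  coordn ((M - a%:M) *m v) i = coordn (M *m v) i - a * coordn v i.
Proof. by rewrite mulmxBl coordnB mul_scalar_mx coordnZ. Qed.

Lemma coordn_mulmx (M : 'M[R]_n) (F : nat -> nat -> R) v i :
  (forall j k : 'I_n, M j k = F j k) -> (i < n)%N ->
  coordn (M *m v) i = \sum_(0 <= j < n) F i j * coordn v j.
Proof.
move=> MF hi; rewrite (coordn_ord _ (Ordinal hi)) mxE big_mkord.
by apply: eq_bigr => j _; rewrite MF coordn_ord.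
Qed.

Lemma dotE u v : (u^T *m v) 0 0 = \sum_(0 <= i < n) coordn u i * coordn v i.
Proof. by rewrite mxE big_mkord; apply: eq_bigr => i _; rewrite !coordn_ord mxE. Qed.

Lemma enorm_ge0 v : 0 <= enorm v.
Proof. exact: sqrtr_ge0. Qed.

Lemma enormE v : enorm v = Num.sqrt (\sum_(0 <= i < n) coordn v i ^+ 2).
Proof. by rewrite /enorm big_mkord; congr Num.sqrt; apply: eq_bigr => i _; rewrite coordn_ord. Qed.

Lemma blkB u v j : blk (u - v) j = blk u j - blk v j.
Proof. by apply/matrixP => t k; rewrite !mxE coordnB. Qed.

End Coordinates.

Lemma coordn_blk (R : realType) n (v : 'cV[R]_n) j t :
  (t < 2)%N -> coordn (blk v j) t = coordn v (2 * j.-1 + t).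
Proof. by move=> ht; rewrite (coordn_ord _ (Ordinal ht)) mxE. Qed.

(* Blocks are numbered from 0 here: [rad2 v q] is the squared norm of [blk v q.+1]. *)
Definition rad2 (R : realType) n (v : 'cV[R]_n) (q : nat) : R :=
  coordn v (2 * q) ^+ 2 + coordn v (2 * q + 1) ^+ 2.

Lemma rad2_ge0 (R : realType) n (v : 'cV[R]_n) q : 0 <= rad2 v q.
Proof. by rewrite addr_ge0 ?sqr_ge0. Qed.

Lemma enorm_blk (R : realType) n (v : 'cV[R]_n) j : enorm (blk v j) = Num.sqrt (rad2 v j.-1).
Proof. by rewrite enormE !big_nat_recl // big_geq // !coordn_blk // addn0 addr0. Qed.

Lemma rad2Z (R : realType) n (a : R) (v : 'cV[R]_n) q : rad2 (a *: v) q = a ^+ 2 * rad2 v q.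
Proof. by rewrite /rad2 !coordnZ; ring. Qed.

Lemma rad2_gt0 (R : realType) n (v : 'cV[R]_n) j : blk v j != 0 -> 0 < rad2 v j.-1.
Proof.
apply: contraNT; rewrite -leNgt => h.
have : rad2 v j.-1 == 0 by rewrite eq_le h rad2_ge0.
rewrite paddr_eq0 ?sqr_ge0 // !sqrf_eq0 => /andP[/eqP h0 /eqP h1].
apply/eqP/matrixP => t k; rewrite !mxE.
by case: t => [[|[|t]]] //= _; rewrite ?addn0 ?h0 ?h1.
Qed.

Lemma sum_pairs (R : realType) (h : nat -> R) p :
  \sum_(0 <= i < 2 * p) h i = \sum_(0 <= q < p) (h (2 * q)%N + h (2 * q + 1)%N).
Proof.
elim: p => [|p IH]; first by rewrite !big_geq.
by rewrite mulnS add2n !big_nat_recr //= IH addn1 addrA.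
Qed.

Lemma half2n p : ((2 * p)./2 = p)%N.
Proof. by rewrite mul2n doubleK. Qed.

Lemma half2n1 p : ((2 * p + 1)./2 = p)%N.
Proof. by rewrite addn1 mul2n /= uphalf_double. Qed.

Lemma odd2n p : odd (2 * p) = false.
Proof. by rewrite mul2n odd_double. Qed.

Lemma odd2n1 p : odd (2 * p + 1).
Proof. by rewrite addn1 /= odd2n. Qed.

Section BlockRotation.
Variables (R : realType) (m : nat) (b : bool) (c s : nat -> R).
Local Notation n := (2 * m + b)%N.
Local Notation A := (blockrot m b c s).
Local Notation X := coordn.

Definition blockrot_entry (i j : nat) : R :=
  if (i < 2 * m)%N then
    (if i./2 == j./2 then
       (if i == j then c (i./2).+1 else if ~~ odd i then s (i./2).+1 else - s (i./2).+1)
     else 0)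
  else (if i == j then 1 else 0).

Lemma blockrot_entryE (i j : 'I_n) : A i j = blockrot_entry i j.
Proof. by rewrite mxE. Qed.

Lemma blockrot_entry_block p q : (p < m)%N ->
  [/\ blockrot_entry (2 * p) (2 * q) = if q == p then c p.+1 else 0,
      blockrot_entry (2 * p) (2 * q + 1) = if q == p then s p.+1 else 0,
      blockrot_entry (2 * p + 1) (2 * q) = if q == p then - s p.+1 else 0 &
      blockrot_entry (2 * p + 1) (2 * q + 1) = if q == p then c p.+1 else 0].
Proof.
move=> hp; rewrite /blockrot_entry.
have /andP[-> ->] : (2 * p < 2 * m)%N && (2 * p + 1 < 2 * m)%N by lia.
rewrite !half2n !half2n1.
have [->|//] := eqVneq q p.
have /andP[/negbTE -> /negbTE ->] : ((2 * p)%N != 2 * p + 1) && (2 * p + 1 != 2 * p)%N by lia.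
by rewrite !eqxx odd2n odd2n1.
Qed.

Lemma blockrot_entry_tail p : (p < m)%N ->
  [/\ blockrot_entry (2 * p) (2 * m) = 0, blockrot_entry (2 * p + 1) (2 * m) = 0,
      blockrot_entry (2 * m) (2 * p) = 0 & blockrot_entry (2 * m) (2 * p + 1) = 0].
Proof.
move=> hp; rewrite /blockrot_entry ltnn.
have /andP[-> ->] : (2 * p < 2 * m)%N && (2 * p + 1 < 2 * m)%N by lia.
by rewrite !half2n !half2n1 !ifF //; apply/eqP; lia.
Qed.

Lemma sum_blocks (f : nat -> R) (v : 'cV[R]_n) :
  \sum_(0 <= i < n) f i * X v i =
  \sum_(0 <= q < m) (f (2 * q)%N * X v (2 * q) + f (2 * q + 1)%N * X v (2 * q + 1))
    + f (2 * m)%N * X v (2 * m).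
Proof.
rewrite (@big_cat_nat _ _ _ (2 * m)) ?leq_addr //= sum_pairs; congr (_ + _).
move: v; case: b => v; first by rewrite big_ltn 1?big_geq ?addr0 //; lia.
by rewrite big_geq ?coordn_out ?mulr0 ?addn0.
Qed.

Lemma blockrot_mul_even v p : (p < m)%N ->
  X (A *m v) (2 * p) = c p.+1 * X v (2 * p) + s p.+1 * X v (2 * p + 1).
Proof.
move=> hp; rewrite (coordn_mulmx _ blockrot_entryE); last lia.
rewrite sum_blocks; have [-> _ _ _] := blockrot_entry_tail hp; rewrite mul0r addr0.
rewrite (eq_bigr (fun q =>
  if q == p then c p.+1 * X v (2 * p) + s p.+1 * X v (2 * p + 1) else 0)).
  by rewrite -big_mkcond big_nat1_eq /= hp.
move=> q _; have [-> -> _ _] := blockrot_entry_block q hp.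
by case: eqP => [->|]; rewrite ?mul0r ?addr0.
Qed.

Lemma blockrot_mul_odd v p : (p < m)%N ->
  X (A *m v) (2 * p + 1) = - s p.+1 * X v (2 * p) + c p.+1 * X v (2 * p + 1).
Proof.
move=> hp; rewrite (coordn_mulmx _ blockrot_entryE); last lia.
rewrite sum_blocks; have [_ -> _ _] := blockrot_entry_tail hp; rewrite mul0r addr0.
rewrite (eq_bigr (fun q =>
  if q == p then - s p.+1 * X v (2 * p) + c p.+1 * X v (2 * p + 1) else 0)).
  by rewrite -big_mkcond big_nat1_eq /= hp.
move=> q _; have [_ _ -> ->] := blockrot_entry_block q hp.
by case: eqP => [->|]; rewrite ?mul0r ?addr0.
Qed.

Lemma blockrot_mul_tail v : X (A *m v) (2 * m) = X v (2 * m).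
Proof.
have [hb|hb] := ltnP (2 * m) n; last by rewrite !coordn_out.
rewrite (coordn_mulmx _ blockrot_entryE) // sum_blocks big_nat big1 ?add0r => [|q /andP[_ hq]].
  by rewrite /blockrot_entry ltnn eqxx mul1r.
by have [_ _ -> ->] := blockrot_entry_tail hq; rewrite !mul0r addr0.
Qed.

End BlockRotation.

Lemma blockrot_entry_opp (R : realType) m (c s : nat -> R) i j :
  blockrot_entry m c s j i = blockrot_entry m c (fun k => - s k) i j.
Proof.
rewrite /blockrot_entry; have [hi|hi] := ltnP i (2 * m); have [hj|hj] := ltnP j (2 * m).
- rewrite [j == i]eq_sym [j./2 == _]eq_sym.
  have [hh|//] := eqVneq i./2 j./2; have [->//|ne] := eqVneq i j.
  have -> : odd j = ~~ odd i by lia.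
  by rewrite hh; case: (odd i); rewrite ?opprK.
- have /negbTE -> : i./2 != j./2 by lia.
  by have /negbTE -> : j != i by lia.
- have /negbTE -> : j./2 != i./2 by lia.
  by have /negbTE -> : i != j by lia.
- by rewrite eq_sym.
Qed.

(* So the second half-step of ACI(1), which uses A^T, is again a block-rotation step. *)
Lemma trmx_blockrot (R : realType) m b (c s : nat -> R) :
  (blockrot m b c s)^T = blockrot m b c (fun k => - s k).
Proof. by apply/matrixP => i j; rewrite mxE !blockrot_entryE blockrot_entry_opp. Qed.

Section Quadratic.
Variables (R : realType) (m : nat) (b : bool) (c s : nat -> R).
Local Notation n := (2 * m + b)%N.
Local Notation A := (blockrot m b c s).
Local Notation X := coordn.
Implicit Types (v : 'cV[R]_n) (a : R).

Definition sqnorm v : R := \sum_(0 <= q < m) rad2 v q + X v (2 * m) ^+ 2.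

Definition rayleigh v : R := \sum_(0 <= q < m) c q.+1 * rad2 v q + X v (2 * m) ^+ 2.

Definition outer_sqnorm v : R := \sum_(1 <= q < m) rad2 v q + X v (2 * m) ^+ 2.

Lemma enorm_sqnorm v : enorm v = Num.sqrt (sqnorm v).
Proof.
rewrite enormE (eq_bigr (fun i => X v i * X v i)) => [|i _]; last by rewrite expr2.
by rewrite sum_blocks /sqnorm /rad2 -!expr2.
Qed.

Lemma sqnorm_ge0 v : 0 <= sqnorm v.
Proof. by rewrite addr_ge0 ?sqr_ge0 // sumr_ge0 // => q _; rewrite rad2_ge0. Qed.

Lemma outer_sqnorm_ge0 v : 0 <= outer_sqnorm v.
Proof. by rewrite addr_ge0 ?sqr_ge0 // sumr_ge0 // => q _; rewrite rad2_ge0. Qed.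

Lemma sqnorm_split v : (0 < m)%N -> sqnorm v = rad2 v 0 + outer_sqnorm v.
Proof. by move=> hm; rewrite /sqnorm big_ltn // addrA. Qed.

Lemma outer_sqnorm_le v : (0 < m)%N -> outer_sqnorm v <= sqnorm v.
Proof. by move=> hm; rewrite sqnorm_split // lerDr rad2_ge0. Qed.

Lemma outer_sqnorm_contract (rho : R) (u v : 'cV[R]_n) : 0 <= rho ->
  (forall j, (2 <= j <= m)%N -> enorm (blk u j) <= rho * enorm (blk v j)) ->
  (b -> `|X u (2 * m)| <= rho * `|X v (2 * m)|) ->
  outer_sqnorm u <= rho ^+ 2 * outer_sqnorm v.
Proof.
move=> hrho hblk htail; rewrite /outer_sqnorm mulrDr mulr_sumr lerD //.
  apply: ler_sum_nat => q hq; have := hblk q.+1 ltac:(lia); rewrite !enorm_blk /= => h.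
  rewrite -[rad2 u q]sqr_sqrtr ?rad2_ge0 // -[rad2 v q]sqr_sqrtr ?rad2_ge0 // -exprMn.
  by rewrite ler_sqr ?nnegrE ?mulr_ge0 ?sqrtr_ge0.
have [hb|hb] := orP (orbN b); last first.
  have u0 : X u (2 * m) = 0 by rewrite coordn_out // (negbTE hb) addn0.
  by rewrite u0 expr0n mulr_ge0 ?sqr_ge0.
rewrite -!(real_normK (num_real (X _ _))) -exprMn ler_sqr ?nnegrE ?mulr_ge0 //.
exact: htail.
Qed.

Lemma sqnormZ a v : sqnorm (a *: v) = a ^+ 2 * sqnorm v.
Proof.
rewrite /sqnorm mulrDr mulr_sumr coordnZ exprMn; congr (_ + _).
by apply: eq_bigr => q _; rewrite /rad2 !coordnZ; ring.
Qed.

Lemma sqnorm_normalize v : 0 < sqnorm v -> sqnorm (normalize v) = 1.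
Proof.
move=> hv; rewrite /normalize sqnormZ enorm_sqnorm exprVn sqr_sqrtr ?ltW //.
by rewrite mulVf // gt_eqF.
Qed.

Lemma rayleighE v : (v^T *m A *m v) 0 0 = rayleigh v.
Proof.
rewrite -mulmxA dotE (eq_bigr (fun i => X (A *m v) i * X v i)) => [|i _]; last by rewrite mulrC.
rewrite sum_blocks blockrot_mul_tail -expr2; congr (_ + _).
by apply: eq_big_nat => q hq; rewrite blockrot_mul_even ?blockrot_mul_odd /rad2; [ring|lia|lia].
Qed.

Lemma rayleigh_ge v : (forall j, (1 <= j <= m)%N -> c 1 <= c j) -> c 1 <= 1 ->
  c 1 * sqnorm v <= rayleigh v.
Proof.
move=> hc hc1; rewrite /sqnorm /rayleigh mulrDr mulr_sumr lerD //.
  by apply: ler_sum_nat => q hq; rewrite ler_wpM2r ?rad2_ge0 ?hc //; lia.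
by rewrite ler_piMl ?sqr_ge0.
Qed.

Lemma rayleigh_gap v : (forall j, (1 <= j <= m)%N -> c j <= 1) -> (0 < m)%N ->
  (1 - c 1) * rad2 v 0 <= sqnorm v - rayleigh v.
Proof.
move=> hc1 hm; rewrite /sqnorm /rayleigh opprD addrACA subrr addr0 -sumrB big_ltn //=.
rewrite mulrBl mul1r -[X in X <= _]addr0 lerD // big_nat sumr_ge0 // => q hq.
have := rad2_ge0 v q; have := hc1 q.+1 ltac:(lia); nra.
Qed.

Section Shift.
Hypothesis Hcs : forall j, (1 <= j <= m)%N -> c j ^+ 2 + s j ^+ 2 = 1.

Lemma rad2_shift a v q : (q < m)%N ->
  rad2 ((A - a%:M) *m v) q = (1 - 2 * a * c q.+1 + a ^+ 2) * rad2 v q.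
Proof.
move=> hq; rewrite /rad2 !coordn_shift blockrot_mul_even ?blockrot_mul_odd //.
have cs : c q.+1 ^+ 2 + s q.+1 ^+ 2 = 1 by apply: Hcs; lia.
by rewrite -{1}cs; ring.
Qed.

Lemma sqnorm_shift a v :
  sqnorm ((A - a%:M) *m v) = sqnorm v - 2 * a * rayleigh v + a ^+ 2 * sqnorm v.
Proof.
rewrite /sqnorm /rayleigh coordn_shift blockrot_mul_tail.
set S := \sum_(0 <= q < m) rad2 v q; set C := \sum_(0 <= q < m) c q.+1 * rad2 v q.
rewrite (eq_big_nat _ _
  (F2 := fun q => rad2 v q - 2 * a * (c q.+1 * rad2 v q) + a ^+ 2 * rad2 v q)).
  by rewrite big_split big_split /= sumrN -!mulr_sumr -/S -/C; ring.
by move=> q hq; rewrite rad2_shift; [ring | lia].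
Qed.

Lemma normalize_shift v : sqnorm v = 1 ->
  normalize ((A - (rayleigh v)%:M) *m v) =
  (Num.sqrt (1 - rayleigh v ^+ 2))^-1 *: ((A - (rayleigh v)%:M) *m v).
Proof.
by move=> hv; rewrite /normalize enorm_sqnorm sqnorm_shift hv; congr ((Num.sqrt _)^-1 *: _); ring.
Qed.

End Shift.

Lemma first_block_shift a v : (0 < m)%N ->
  X ((A - a%:M) *m v) 0 = (c 1 - a) * X v 0 + s 1 * X v 1 /\
  X ((A - a%:M) *m v) 1 = - s 1 * X v 0 + (c 1 - a) * X v 1.
Proof.
move=> hm; rewrite !coordn_shift.
have := blockrot_mul_even c s v hm; have := blockrot_mul_odd c s v hm.
by rewrite muln0 => -> ->; split; ring.
Qed.

End Quadratic.

Lemma sqrt_one_sub_sqr_mul_le (R : rcfType) (a b c : R) :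
  0 <= c -> c <= a -> c <= b -> a ^+ 2 <= 1 -> b ^+ 2 <= 1 ->
  Num.sqrt (1 - a ^+ 2) * Num.sqrt (1 - b ^+ 2) <= 1 - (a + b) * c + a * b.
Proof.
move=> c0 ca cb a1 b1.
have ea := sqr_sqrtr (_ : 0 <= 1 - a ^+ 2); have eb := sqr_sqrtr (_ : 0 <= 1 - b ^+ 2).
have := sqr_ge0 (Num.sqrt (1 - a ^+ 2) - Num.sqrt (1 - b ^+ 2)).
rewrite sqrrB ea ?eb ?subr_ge0 //; nra.
Qed.

Section HalfStep.
Variables (R : realType) (m : nat) (b : bool) (c s : nat -> R).
Local Notation n := (2 * m + b)%N.
Local Notation A := (blockrot m b c s).
Hypotheses (Hcs : forall j, (1 <= j <= m)%N -> c j ^+ 2 + s j ^+ 2 = 1)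
  (hs1 : s 1 != 0) (hc_min : forall j, (1 <= j <= m)%N -> c 1 <= c j) (hm : (0 < m)%N).

Lemma cos_le1 j : (1 <= j <= m)%N -> c j <= 1.
Proof. by move=> hj; have := Hcs hj; have := sqr_ge0 (s j); nra. Qed.

Lemma cos1_sqr_lt1 : c 1 ^+ 2 < 1.
Proof.
have := Hcs (j := 1) ltac:(lia).
have : 0 < s 1 ^+ 2 by rewrite exprn_even_gt0 //= hs1 orbT.
lra.
Qed.

Lemma rayleigh_bounds (v : 'cV[R]_n) : sqnorm v = 1 -> 0 < rad2 v 0 ->
  c 1 <= rayleigh c v /\ rayleigh c v ^+ 2 < 1.
Proof.
move=> hv hv0; have := rayleigh_ge v hc_min (cos_le1 (j := 1) ltac:(lia)).
have := rayleigh_gap v cos_le1 hm; rewrite hv mulr1 => gap ge.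
have c1 := cos1_sqr_lt1; have c1lt : -1 < c 1 < 1 by apply/andP; split; nra.
have : 0 < (1 - c 1) * rad2 v 0 by rewrite mulr_gt0 // subr_gt0; case/andP: c1lt.
by split=> //; nra.
Qed.

Lemma half_step (v : 'cV[R]_n) : sqnorm v = 1 -> 0 < rad2 v 0 ->
  sqnorm (normalize ((A - (rayleigh c v)%:M) *m v)) = 1 /\
  0 < rad2 (normalize ((A - (rayleigh c v)%:M) *m v)) 0.
Proof.
move=> hv hv0; have [ge1 lt1] := rayleigh_bounds hv hv0; set a := rayleigh c v in ge1 lt1 *.
have hN : 0 < 1 - a ^+ 2 by rewrite subr_gt0.
split.
  by rewrite sqnorm_normalize // sqnorm_shift // hv; rewrite -/a; nra.
rewrite normalize_shift // rad2Z rad2_shift //.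
apply: mulr_gt0; first by rewrite exprn_gt0 // invr_gt0 sqrtr_gt0.
apply: mulr_gt0 => //; have := Hcs (j := 1) ltac:(lia).
have : 0 < s 1 ^+ 2 by rewrite exprn_even_gt0 //= hs1 orbT.
rewrite -/a; have := sqr_ge0 (a - c 1); nra.
Qed.

End HalfStep.

Section AciStep.
Variables (R : realType) (m : nat) (b : bool) (c s : nat -> R).
Local Notation n := (2 * m + b)%N.
Local Notation A := (blockrot m b c s).
Local Notation X := coordn.
Hypotheses (Hcs : forall j, (1 <= j <= m)%N -> c j ^+ 2 + s j ^+ 2 = 1)
  (hs1 : s 1 != 0) (hc_min : forall j, (1 <= j <= m)%N -> c 1 <= c j)
  (hc1 : 0 < c 1) (hm : (0 < m)%N).

Let Hcs_opp j : (1 <= j <= m)%N -> c j ^+ 2 + (- s j) ^+ 2 = 1.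
Proof. by rewrite sqrrN; exact: Hcs. Qed.

Let hs1_opp : - s 1 != 0.
Proof. by rewrite oppr_eq0. Qed.

Let w (v : 'cV[R]_n) := normalize ((A - (rayleigh c v)%:M) *m v).

Lemma aci_stepE (v : 'cV[R]_n) :
  aci_step A v = normalize ((blockrot m b c (fun j => - s j) - (rayleigh c (w v))%:M) *m w v).
Proof. by rewrite /aci_step /aci_w !rayleighE trmx_blockrot. Qed.

Lemma aci_step_unit (v : 'cV[R]_n) : sqnorm v = 1 -> 0 < rad2 v 0 ->
  sqnorm (aci_step A v) = 1 /\ 0 < rad2 (aci_step A v) 0.
Proof.
move=> hv hv0; have [hw hw0] := half_step Hcs hs1 hc_min hm hv hv0.
by rewrite aci_stepE; apply: half_step.
Qed.

Lemma aci_step_first_block_dot (v : 'cV[R]_n) : sqnorm v = 1 -> 0 < rad2 v 0 ->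
  rad2 v 0 <= X (aci_step A v) 0 * X v 0 + X (aci_step A v) 1 * X v 1.
Proof.
move=> hv hv0; have [hw hw0] := half_step Hcs hs1 hc_min hm hv hv0.
have [ga la] := rayleigh_bounds Hcs hs1 hc_min hm hv hv0.
have [gb lb] := rayleigh_bounds Hcs_opp hs1_opp hc_min hm hw hw0.
rewrite aci_stepE normalize_shift // !coordnZ.
have [-> ->] := first_block_shift c (fun j => - s j) (rayleigh c (w v)) (w v) hm.
set bt := rayleigh c (w v) in gb lb *; set N2 := Num.sqrt (1 - bt ^+ 2).
rewrite /w normalize_shift // !coordnZ; have [-> ->] := first_block_shift c s (rayleigh c v) v hm.
set a := rayleigh c v in ga la *; set N1 := Num.sqrt (1 - a ^+ 2).
(* The cross terms in s_1 cancel: only the symmetric part of the 2x2 map survives. *)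
rewrite [X in _ <= X](_ : _ = (N1 * N2)^-1 *
    ((c 1 ^+ 2 + s 1 ^+ 2 - (a + bt) * c 1 + a * bt) * rad2 v 0)); last first.
  by rewrite invfM /rad2; ring.
have hN : 0 < N1 * N2 by rewrite mulr_gt0 // sqrtr_gt0 subr_gt0.
rewrite Hcs // mulrA ler_peMl ?rad2_ge0 // mulrC ler_pdivlMr // mul1r.
by apply: sqrt_one_sub_sqr_mul_le; rewrite // ltW.
Qed.

Lemma aci_step_first_block_increment (v : 'cV[R]_n) : sqnorm v = 1 -> 0 < rad2 v 0 ->
  enorm (blk (aci_step A v) 1 - blk v 1) ^+ 2 <= outer_sqnorm v.
Proof.
move=> hv hv0; have [hu _] := aci_step_unit hv hv0.
have := aci_step_first_block_dot hv hv0; set u := aci_step A v => hdot.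
rewrite -blkB enorm_blk sqr_sqrtr ?rad2_ge0 //.
have -> : rad2 (u - v) 0 = rad2 u 0 + rad2 v 0 - 2 * (X u 0 * X v 0 + X u 1 * X v 1).
  by rewrite /rad2 !coordnB; ring.
have := sqnorm_split u hm; have := sqnorm_split v hm; have := outer_sqnorm_ge0 u.
rewrite hu hv; lra.
Qed.

Lemma aci_v_unit (v0 : 'cV[R]_n) : sqnorm v0 = 1 -> 0 < rad2 v0 0 ->
  forall k, sqnorm (aci_v A v0 k) = 1 /\ 0 < rad2 (aci_v A v0 k) 0.
Proof. by move=> h1 h2; elim=> [//|k [IH1 IH2]]; exact: aci_step_unit. Qed.

End AciStep.

Lemma geometric_decay (R : numDomainType) (u : nat -> R) (r : R) k0 : 0 <= r ->
  (forall k, (k0 <= k)%N -> u k.+1 <= r * u k) -> forall i, u (k0 + i)%N <= r ^+ i * u k0.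
Proof.
move=> r0 hu; elim=> [|i IH]; first by rewrite addn0 expr0 mul1r.
by rewrite addnS exprS -mulrA; apply: le_trans (hu _ (leq_addr _ _)) (ler_wpM2l r0 IH).
Qed.

Lemma increasing_ge_first (R : numDomainType) (f : nat -> R) m :
  (forall j, (1 <= j < m)%N -> f j < f j.+1) -> forall j, (1 <= j <= m)%N -> f 1 <= f j.
Proof.
move=> hf; elim=> [//|[//|j] IH hj].
by apply: le_trans (IH _) (ltW (hf _ _)); lia.
Qed.

Lemma blockrot0 (R : realType) b (c s : nat -> R) : blockrot 0 b c s = 1%:M.
Proof.
apply/matrixP => i j; rewrite !mxE.
by rewrite (_ : (i < 2 * 0)%N = false) //; case: (i == j).
Qed.

Lemma grade_id_le1 (R : realType) n (v : 'cV[R]_n) : (grade 1%:M v <= 1)%N.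
Proof.
rewrite /grade; case: ex_minnP => d _; apply; apply/asboolP.
exists ('X - 1%:P); split; [exact: monicXsubC | exact: size_XsubC |].
rewrite /poly_mx_app size_XsubC big_ord_recr big_ord1 /= !coefB !coefX !coefC /=.
by rewrite expr1 expr0 !mul1mx sub0r subr0 scaleN1r scale1r addNr.
Qed.

Theorem lemma4p7 (R : realType) (m : nat) (b : bool) (c s : nat -> R)
  (v0 : 'cV[R]_(2 * m + b)) (k0 : nat) (rho : R) :
  (forall j, (1 <= j <= m)%N -> c j ^+ 2 + s j ^+ 2 = 1) ->
  (forall j, (1 <= j <= m)%N -> s j != 0) ->
  0 < c 1 ->
  (forall j, (1 <= j < m)%N -> c j < c j.+1) ->
  enorm v0 = 1 ->
  (2 <= grade (blockrot m b c s) v0)%N ->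
  blk v0 1 != 0 ->
  0 < rho < 1 ->
  (forall k, (k0 <= k)%N ->
     (forall j, (2 <= j <= m)%N ->
        enorm (blk (aci_v (blockrot m b c s) v0 k.+1) j)
          <= rho * enorm (blk (aci_v (blockrot m b c s) v0 k) j)) /\
     (b -> `|coordn (aci_v (blockrot m b c s) v0 k.+1) (2 * m)|
            <= rho * `|coordn (aci_v (blockrot m b c s) v0 k) (2 * m)|)) ->
  forall k, (k0 <= k)%N ->
    enorm (blk (aci_v (blockrot m b c s) v0 k.+1) 1 - blk (aci_v (blockrot m b c s) v0 k) 1)
      <= rho ^+ (k - k0).
Proof.
move=> Hcs Hs hc1 Hc ev0 hgrade bv0 /andP[/ltW rho0 _] Hdecay k hk.
(* For m = 0 the matrix is the identity, which the grade hypothesis excludes. *)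
have hm : (0 < m)%N.
  rewrite lt0n; apply/negP => /eqP m0; subst m.
  by move: hgrade; rewrite blockrot0 leqNgt ltnS grade_id_le1.
have hs1 := Hs 1 ltac:(lia); have hc_min := increasing_ge_first Hc.
have hv0 : sqnorm v0 = 1.
  by rewrite -[sqnorm v0]sqr_sqrtr ?sqnorm_ge0 // -enorm_sqnorm ev0 expr1n.
have [hk1 hk2] := aci_v_unit Hcs hs1 hc_min hm hv0 (rad2_gt0 bv0) k.
have [h01 _] := aci_v_unit Hcs hs1 hc_min hm hv0 (rad2_gt0 bv0) k0.
have outer_decay := geometric_decay (u := fun k => outer_sqnorm (aci_v (blockrot m b c s) v0 k))
  (sqr_ge0 rho) (fun k hk => outer_sqnorm_contract rho0 (Hdecay k hk).1 (Hdecay k hk).2).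
rewrite -ler_sqr ?nnegrE ?enorm_ge0 ?exprn_ge0 //.
apply: le_trans (aci_step_first_block_increment Hcs hs1 hc_min hc1 hm hk1 hk2) _.
have := outer_decay (k - k0)%N; rewrite subnKC //= => hdecay; apply: le_trans hdecay _.
by rewrite -exprM mulnC exprM ler_piMr ?exprn_ge0 // -h01 outer_sqnorm_le.
Qed.
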